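(* Let $c_1,c_2$ be positive constants and $h:=4(2\sqrt2 c_1+c_2^2)$. Then there exists a constant $\gamma_1>0$ such that, for all sufficiently large $n$, for every $(2n,d,b)$-clustered regular graph $G=(V,E)$, if each node $u\in V$ chooses a color in $\{red,blue\}$ uniformly at random and independently of the others, then $$\Pr\big[s^{(0)}_1\ge h\sqrt n \ \wedge\ -s^{(0)}_2\ge h\sqrt n\big]\ge\gamma_1.$$
   Context: A $(2n,d,b)$-clustered regular graph is a graph $G=(V,E)$ with $V=V_1\cup V_2$ disjoint, $|V_1|=|V_2|=n$, every node of degree $d$, every node of $V_1$ having exactly $b$ neighbors in $V_2$ and vice versa. For $i\in\{1,2\}$, $s^{(0)}_i$ denotes the number of red nodes in $V_i$ minus the number of blue nodes in $V_i$ in the initial coloring. *)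

From mathcomp Require Import all_boot all_order all_algebra.
From mathcomp Require Import reals.
Set Implicit Arguments. Unset Strict Implicit. Unset Printing Implicit Defensive.
Import Order.TTheory GRing.Theory Num.Theory.
Local Open Scope ring_scope.

Definition clustered_regular (V : finType) (e : rel V) (V1 : {set V})
  (n d b : nat) : Prop :=
  [/\ symmetric e /\ irreflexive e,
      #|V1| = n /\ #|~: V1| = n,
      (forall u : V, #|[set v | e u v]| = d),
      (forall u : V, u \in V1 -> #|[set v in ~: V1 | e u v]| = b) &
      (forall u : V, u \notin V1 -> #|[set v in V1 | e u v]| = b)].

(* A coloring: true = red, false = blue. *)
Definition coloring (V : finType) := {ffun V -> bool}.

Definition spread (V : finType) (col : coloring V) (A : {set V}) : int :=
  (#|[set v in A | col v]|%:Z - #|[set v in A | ~~ col v]|%:Z)%R.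

(* Probability of an event when every node picks its colour uniformly and
   independently, i.e. the uniform distribution on all colorings. *)
Definition unif_prob (R : realType) (V : finType) (P : pred (coloring V)) : R :=
  (#|[set c : coloring V | P c]|%:R / #|{: coloring V}|%:R)%R.

From Stdlib Require PeanoNat.
From mathcomp Require Import all_boot all_order all_algebra reals.
From mathcomp Require Import zify ring lra.
Set Implicit Arguments. Unset Strict Implicit. Unset Printing Implicit Defensive.
Import Order.TTheory GRing.Theory Num.Theory.

(* Let H >= h be an integer and r = floor (sqrt n).  A coloring whose red set in
   V1 and whose blue set in ~: V1 both have their size in the window
   [ceil(n/2) + H(r+1), ceil(n/2) + (H+1)(r+1)) lies in the event, since both
   spreads are then at least 2H(r+1) >= h sqrt n.  Such a window carries a
   constant fraction of all subsets of an n-set: C(n, ceil(n/2)) >= 2^n/(3(r+1))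
   by a Wallis-type estimate, and within J = (H+1)(r+1) of the centre the ratios
   of consecutive binomial coefficients are at least 1 - 4J/n = 1 - O(1/r), so
   all r+1 coefficients of the window are within a constant factor of the
   central one.  The two halves are colored independently, so the probability
   is at least the square of that fraction. *)

Lemma mul_bin_center_succ m : 'C(m.*2.+2, m.+1) * m.+1 = 2 * m.*2.+1 * 'C(m.*2, m).
Proof.
have diag2 := mul_bin_diag m.*2.+2 m.
have diag1 := mul_bin_diag m.*2.+1 m.
have sym : 'C(m.*2.+1, m.+1) = 'C(m.*2.+1, m).
  by rewrite -[in RHS]bin_sub; [congr binomial|]; lia.
rewrite /= sym in diag1 diag2; lia.
Qed.

Lemma bin_center_sqr_ge m : 0 < m -> 16 ^ m <= 'C(m.*2, m) ^ 2 * (4 * m).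
Proof.
elim: m => [//|[|m] IH _] //.
have {}IH := IH isT; have step := mul_bin_center_succ m.+1.
set X := 'C(_, m.+1) in IH step; set Y := 'C(_, m.+2) in step *.
rewrite expnS -(@leq_pmul2r (m.+1 * m.+2)) //.
have -> : Y ^ 2 * (4 * m.+2) * (m.+1 * m.+2) = (Y * m.+2) ^ 2 * (4 * m.+1) by ring.
rewrite step.
have -> : (2 * (m.+1).*2.+1 * X) ^ 2 * (4 * m.+1) =
          4 * (m.+1).*2.+1 ^ 2 * (X ^ 2 * (4 * m.+1)) by ring.
by apply: leq_trans (leq_mul (leqnn _) IH); nia.
Qed.

Lemma bin_half_sqr_ge n : 0 < n -> 4 ^ n <= 'C(n, n - n./2) ^ 2 * (8 * n).
Proof.
move=> n_gt0; have n_eq := odd_double_half n; set m := n./2 in n_eq *.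
case: (odd n) n_eq => /= n_eq.
- have -> : n - m = m.+1 by lia.
  rewrite -n_eq; case: (posnP m) => [->|m_gt0] //.
  have center := bin_center_sqr_ge m_gt0.
  have le_bin : 'C(m.*2, m) <= 'C(m.*2.+1, m.+1) by rewrite binS; lia.
  have -> : 4 ^ (1 + m.*2) = 4 * 16 ^ m by rewrite expnD -mul2n expnM.
  apply: leq_trans (leq_mul (leqnn 4) center) _.
  have := leq_mul (leq_mul le_bin le_bin) (leqnn (16 * m)).
  rewrite !expnS expn0 !muln1 add1n; nia.
- have -> : n - m = m by lia.
  have m_gt0 : 0 < m by lia.
  have := bin_center_sqr_ge m_gt0; rewrite -n_eq.
  have -> : 4 ^ (0 + m.*2) = 16 ^ m by rewrite -mul2n expnM.
  by move/leq_trans; apply; apply: leq_mul => //; lia.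
Qed.

Lemma exp2_le_bin_half n r : n < r.+1 ^ 2 -> 2 ^ n <= 3 * (r.+1 * 'C(n, n - n./2)).
Proof.
move=> n_lt; case: (posnP n) => [->|n_gt0]; first by rewrite bin0 expn0; lia.
rewrite -(@leq_exp2r _ _ 2) // -expnM mulnC expnM.
apply: leq_trans (bin_half_sqr_ge n_gt0) _.
set C := 'C(n, _); have : C ^ 2 * n <= C ^ 2 * r.+1 ^ 2 by rewrite leq_mul2l; lia.
rewrite !expnS !expn0; nia.
Qed.

Lemma card_subsets_range (T : finType) (B : {set T}) lo hi :
  #|[set A : {set T} | (A \subset B) && (lo <= #|A| < hi)]| =
  \sum_(lo <= k < hi) 'C(#|B|, k).
Proof.
elim: hi => [|hi IH].
  by rewrite big_geq // eq_card0 // => A; rewrite !inE ltn0 !andbF.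
case: (ltnP hi lo) => [hi_lt|lo_le].
  by rewrite big_geq ?eq_card0 // => A; rewrite !inE; case: (_ \subset _); lia.
rewrite big_nat_recr //= -IH -cards_draws.
set S := [set A : {set T} | _ && (lo <= #|A| < hi)].
set D := [set A : {set T} | _ && (#|A| == hi)].
have -> : [set A : {set T} | (A \subset B) && (lo <= #|A| < hi.+1)] = S :|: D.
  by apply/setP => A; rewrite !inE; case: (_ \subset _); lia.
have disjSD : S :&: D = set0.
  by apply/setP => A; rewrite !inE; case: (_ \subset _); lia.
by rewrite cardsU disjSD cards0 subn0.
Qed.

Local Open Scope ring_scope.

Lemma one_sub_mul_le_pow (R : realFieldType) (z : R) s :
  z <= 1 -> 1 - s%:R * z <= (1 - z) ^+ s.
Proof.
move=> z_le1; elim: s => [|s IH]; first by rewrite expr0 mul0r subr0.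
have IH' := ler_wpM2l (_ : 0 <= 1 - z) IH; rewrite exprS.
apply: le_trans (IH' _); last by rewrite subr_ge0.
have : 0 <= s%:R * z ^+ 2 :> R by rewrite mulr_ge0 ?sqr_ge0.
by rewrite -natr1; nra.
Qed.

Lemma half_pow_le_pow_one_sub (R : realFieldType) (z : R) s Q J :
  0 <= z <= 1 -> s%:R * z <= 1 / 2 -> (J <= s * Q)%N -> (1 / 2) ^+ Q <= (1 - z) ^+ J.
Proof.
move=> /andP[z_ge0 z_le1] sz_le J_le.
have y_ge0 : 0 <= 1 - z by lra.
have y_le1 : 1 - z <= 1 by lra.
apply: le_trans (ler_wiXn2l y_ge0 y_le1 J_le); rewrite exprM.
apply: lerXn2r; rewrite ?nnegrE ?exprn_ge0 //; first lra.
by apply: le_trans (one_sub_mul_le_pow s z_le1); lra.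
Qed.

Lemma bin_shift_ge_geometric (R : realFieldType) (y : R) n c J : 0 <= y ->
  (forall i, (c <= i < c + J)%N -> y * i.+1%:R <= (n - i)%:R) ->
  forall t, (t <= J)%N -> 'C(n, c)%:R * y ^+ t <= 'C(n, c + t)%:R.
Proof.
move=> y_ge0 ratio; elim=> [|t IH] t_lt; first by rewrite expr0 mulr1 addn0.
have {}IH := IH (ltnW t_lt); have ratio_t := ratio (c + t)%N ltac:(lia).
have pascal : (c + t).+1%:R * 'C(n, (c + t).+1)%:R =
              (n - (c + t))%:R * 'C(n, c + t)%:R :> R by rewrite -!natrM mul_bin_left.
rewrite addnS -(ler_pM2l (ltr0Sn R (c + t))) pascal.
apply: le_trans (ler_wpM2l (ler0n _ _) IH).
rewrite exprS [leLHS](_ : _ = y * (c + t).+1%:R * ('C(n, c)%:R * y ^+ t)); last by ring.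
by rewrite ler_wpM2r // mulr_ge0 ?exprn_ge0.
Qed.

Lemma bin_half_shift_ge (R : realFieldType) n J t : (4 * J <= n)%N -> (t <= J)%N ->
  'C(n, n - n./2)%:R * (1 - (4 * J)%:R / n%:R) ^+ t <= 'C(n, n - n./2 + t)%:R :> R.
Proof.
move=> J_le t_le; case: (posnP n) => [n0|n_gt0].
  have -> : t = 0%N by lia.
  by rewrite expr0 mulr1 addn0.
have n_pos : 0 < n%:R :> R by rewrite ltr0n.
apply: bin_shift_ge_geometric t_le.
  by rewrite subr_ge0 ler_pdivrMr // mul1r ler_nat.
move=> i /andP[i_ge i_lt]; have n_eq := odd_double_half n.
have i_le : (i <= n)%N by lia.
have i_odd : (2 * i + 1 <= n + 2 * J)%N by lia.
have i_half : (n <= 2 * i.+1)%N by lia.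
have key : (n * i.+1 <= n * (n - i) + 4 * J * i.+1)%N by nia.
rewrite mulrBl mul1r lerBlDr -(ler_pM2l n_pos).
rewrite [leRHS](_ : _ = n%:R * (n - i)%:R + (4 * J)%:R * i.+1%:R); last first.
  by field; rewrite gt_eqF.
by rewrite -!natrM -natrD ler_nat.
Qed.

Lemma bin_window_ge (R : realFieldType) (H : nat) : exists2 g : R, 0 < g &
  forall n r, (16 * H.+1 <= r)%N -> (r ^ 2 <= n < r.+1 ^ 2)%N ->
  g * 2 ^+ n <= (\sum_(n - n./2 + H * r.+1 <= k < n - n./2 + H.+1 * r.+1) 'C(n, k))%:R.
Proof.
set Q := (32 * H.+1 ^ 2)%N.
have q_ge0 : 0 <= (1 / 2 : R) ^+ Q by apply: exprn_ge0; lra.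
exists ((1 / 2) ^+ Q / 3); first by rewrite divr_gt0 // exprn_gt0 //; lra.
move=> n r r_ge /andP[n_ge n_lt].
set c := (n - n./2)%N; set J := (H.+1 * r.+1)%N; set s := (r %/ (16 * H.+1))%N.
have n_gt0 : (0 < n)%N by nia.
have J_le : (4 * J <= n)%N by nia.
have /andP[s_le s_gt] : (16 * H.+1 * s <= r < 32 * H.+1 * s)%N.
  have s_gt0 : (0 < s)%N by rewrite divn_gt0.
  have := divn_eq r (16 * H.+1); have := @ltn_pmod r (16 * H.+1) isT.
  rewrite -/s; set m := (r %% _)%N; nia.
have sJ_le : (8 * s * J <= n)%N.
  have := leq_mul s_le (leqnn r.+1); rewrite /J; nia.
have J_sQ : (J <= s * Q)%N.
  by apply: leq_trans (leq_mul (leqnn H.+1) s_gt) _; rewrite /Q; nia.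
set z : R := (4 * J)%:R / n%:R.
have n_pos : 0 < n%:R :> R by rewrite ltr0n.
have z_range : 0 <= z <= 1 by rewrite divr_ge0 //= ler_pdivrMr // mul1r ler_nat.
have sz_le : s%:R * z <= 1 / 2.
  rewrite mulrA ler_pdivrMr // mul1r natrM.
  have : 8 * s%:R * J%:R <= n%:R :> R by rewrite -!natrM ler_nat.
  lra.
(* Blocks of s factors 1 - z each lose at most a factor 2, and J fits in Q blocks. *)
have decay := half_pow_le_pow_one_sub z_range sz_le J_sQ.
have term k : (c + H * r.+1 <= k < c + J)%N -> 'C(n, c)%:R * (1 / 2) ^+ Q <= 'C(n, k)%:R :> R.
  move=> /andP[k_ge k_lt]; have t_le : (k - c <= J)%N by lia.
  have := bin_half_shift_ge R J_le t_le; rewrite -/c subnKC; last lia.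
  apply: le_trans; rewrite ler_wpM2l //; apply: le_trans decay _.
  by apply: ler_wiXn2l; [case/andP: z_range => *; lra | lra | lia].
rewrite natr_sum; apply: le_trans (ler_sum_nat term).
rewrite sumr_const_nat (_ : (c + J - (c + H * r.+1))%N = r.+1); last lia.
have := exp2_le_bin_half n_lt; rewrite -/c -(ler_nat R) natrM natrX => central.
have := ler_wpM2r q_ge0 central; rewrite -mulr_natr !natrM; lra.
Qed.

Lemma card_red_add_blue (V : finType) (c : coloring V) (A : {set V}) :
  (#|[set v in A | c v]| + #|[set v in A | ~~ c v]|)%N = #|A|.
Proof.
rewrite -(cardsID [set v | c v] A); congr (_ + _)%N.
  by apply: eq_card => v; rewrite !inE andbC.
by apply: eq_card => v; rewrite !inE andbC.
Qed.

Lemma spread_red (V : finType) (c : coloring V) (A : {set V}) :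
  spread c A = 2 * #|[set v in A | c v]|%:Z - #|A|%:Z.
Proof. by rewrite /spread -(card_red_add_blue c A) PoszD; ring. Qed.

Lemma oppr_spread_blue (V : finType) (c : coloring V) (A : {set V}) :
  - spread c A = 2 * #|[set v in A | ~~ c v]|%:Z - #|A|%:Z.
Proof. by rewrite /spread -(card_red_add_blue c A) PoszD; ring. Qed.

Lemma unif_probE (R : realType) (V : finType) (P : pred (coloring V)) :
  unif_prob R P = #|[set c : coloring V | P c]|%:R / 2 ^+ #|V|.
Proof. by rewrite /unif_prob card_ffun card_bool natrX. Qed.

Section Paint.
Variables (V : finType) (V1 : {set V}).

Definition paint (A B : {set V}) : coloring V :=
  [ffun v => if v \in V1 then v \in A else v \notin B].

Lemma paint_red (A B : {set V}) : A \subset V1 -> [set v in V1 | paint A B v] = A.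
Proof.
move=> /subsetP sA; apply/setP => v; rewrite !inE ffunE.
by case: ifP => // vV1; case: (boolP (v \in A)) => // /sA; rewrite vV1.
Qed.

Lemma paint_blue (A B : {set V}) : B \subset ~: V1 -> [set v in ~: V1 | ~~ paint A B v] = B.
Proof.
move=> /subsetP sB; apply/setP => v; rewrite !inE ffunE.
by case: ifP => vV1 /=; [case: (boolP (v \in B)) => // /sB; rewrite inE vV1 | rewrite negbK].
Qed.

Lemma card_paint_ge (P1 P2 : {set {set V}}) (E : pred (coloring V)) :
  (forall A, A \in P1 -> A \subset V1) -> (forall B, B \in P2 -> B \subset ~: V1) ->
  (forall A B, A \in P1 -> B \in P2 -> E (paint A B)) ->
  (#|P1| * #|P2| <= #|[set c | E c]|)%N.
Proof.
move=> P1_sub P2_sub P_E.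
have paint_inj : {in setX P1 P2 &, injective (fun p => paint p.1 p.2)}.
  move=> [A1 B1] [A2 B2] /setXP[/P1_sub sA1 /P2_sub sB1] /setXP[/P1_sub sA2 /P2_sub sB2] /=.
  move=> eq12; congr pair.
    by rewrite -(paint_red B1 sA1) eq12 paint_red.
  by rewrite -(paint_blue A1 sB1) eq12 paint_blue.
rewrite -cardsX -(card_in_imset paint_inj); apply: subset_leq_card.
by apply/subsetP => _ /imsetP[[A B] /setXP[inA inB] ->]; rewrite inE P_E.
Qed.

End Paint.

Lemma unif_prob_spreads_ge (R : realType) (V : finType) (V1 : {set V}) n lo hi (x g : R) :
  #|V1| = n -> #|~: V1| = n -> 0 <= g -> x <= (2 * lo%:Z - n%:Z)%:~R ->
  g * 2 ^+ n <= (\sum_(lo <= k < hi) 'C(n, k))%:R ->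
  g ^+ 2 <= unif_prob R (fun c : coloring V =>
              (x <= (spread c V1)%:~R) && (x <= - (spread c (~: V1))%:~R)).
Proof.
move=> cardV1 cardV2 g_ge0 x_le window.
set P1 := [set A : {set V} | (A \subset V1) && (lo <= #|A| < hi)%N].
set P2 := [set B : {set V} | (B \subset ~: V1) && (lo <= #|B| < hi)%N].
have spread_ge (X : {set V}) k : #|X| = n -> (lo <= k)%N -> x <= (2 * k%:Z - #|X|%:Z)%:~R.
  by move=> -> k_ge; apply: le_trans x_le _; rewrite ler_int; lia.
rewrite unif_probE; set E := [set c | _].
have count : (#|P1| * #|P2| <= #|E|)%N.
  apply: (card_paint_ge (V1 := V1)) => [A|B|A B].
  - by rewrite inE => /andP[].
  - by rewrite inE => /andP[].
  rewrite !inE => /andP[sA /andP[A_ge _]] /andP[sB /andP[B_ge _]].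
  rewrite spread_red paint_red // -mulrNz oppr_spread_blue paint_blue //.
  by rewrite !spread_ge.
have cardV : #|V| = (n + n)%N by rewrite -(cardsC V1) cardV1 cardV2.
rewrite cardV exprD ler_pdivlMr ?mulr_gt0 ?exprn_gt0 //.
apply: le_trans (_ : (#|P1| * #|P2|)%:R <= _); last by rewrite ler_nat.
rewrite natrM [leLHS](_ : _ = (g * 2 ^+ n) * (g * 2 ^+ n)); last by ring.
have [P1_ge P2_ge] : g * 2 ^+ n <= #|P1|%:R /\ g * 2 ^+ n <= #|P2|%:R.
  by rewrite !card_subsets_range cardV1 cardV2; split.
by rewrite ler_pM ?mulr_ge0 ?exprn_ge0.
Qed.

Lemma nat_sqrt_spec n : exists r, (r ^ 2 <= n < r.+1 ^ 2)%N.
Proof.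
exists (PeanoNat.Nat.sqrt n).
by have [] := PeanoNat.Nat.sqrt_spec n (PeanoNat.Nat.le_0_l n); lia.
Qed.

Theorem lemma1 (R : realType) (c1 c2 : R) :
  0 < c1 -> 0 < c2 ->
  let h : R := 4 * (2 * Num.sqrt 2 * c1 + c2 ^+ 2) in
  exists gamma1 : R, 0 < gamma1 /\
    exists N : nat, forall n : nat, (N <= n)%N ->
      forall (V : finType) (e : rel V) (V1 : {set V}) (d b : nat),
        clustered_regular e V1 n d b ->
        gamma1 <= unif_prob R (fun col : coloring V =>
                   (h * Num.sqrt (n%:R) <= (spread col V1)%:~R) &&
                   (h * Num.sqrt (n%:R) <= - (spread col (~: V1))%:~R)).
Proof.
move=> c1_gt0 c2_gt0 h.
have h_ge0 : 0 <= h.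
  by rewrite mulr_ge0 // addr_ge0 ?sqr_ge0 // !mulr_ge0 ?sqrtr_ge0 ?ltW.
set H := Num.Def.archi_bound h; have h_le : h <= H%:R := ltW (archi_boundP h_ge0).
have [g g_gt0 window] := bin_window_ge R H.
exists (g ^+ 2); split; first exact: exprn_gt0.
exists ((16 * H.+1) ^ 2)%N => n n_ge V e V1 d b [_ [cardV1 cardV2] _ _ _].
have [r /andP[n_ge_r n_lt_r]] := nat_sqrt_spec n.
have r_ge : (16 * H.+1 <= r)%N by rewrite -ltnS -(@ltn_exp2r _ _ 2) // (leq_ltn_trans n_ge).
apply: unif_prob_spreads_ge cardV1 cardV2 (ltW g_gt0) _ (window n r r_ge _); last first.
  by rewrite n_ge_r.
have sqrt_le : Num.sqrt n%:R <= r.+1%:R :> R.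
  rewrite -[leRHS]ger0_norm // -sqrtr_sqr ler_sqrt ?exprn_ge0 // -natrX ler_nat.
  exact: ltnW.
apply: le_trans (_ : (H * r.+1)%:R <= _); first by rewrite natrM ler_pM ?sqrtr_ge0.
by rewrite pmulrn ler_int; lia.
Qed.
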